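(* Let $n\ge1$, $\delta>0$, and $\hat r\in\mathbb R^n$ with $\hat r_1>\hat r_2>\cdots>\hat r_n$. Let $t_i=\phi(\hat r_i)$, $i=1,\dots,n$, for some increasing function $\phi:\mathbb R\to\mathbb R$. Let $$\pi^{\mathrm{DRO}}(\delta)\in\arg\max_{\pi\in\Delta_n}\{\langle\pi,\hat r\rangle-\delta\|\pi\|_\infty\},\qquad \pi^{\mathrm{DRRO}}(\delta)\in\arg\max_{\pi\in\Delta_n}\{\langle\pi,\hat r\rangle-\max_i(\hat r_i-\delta\pi_i)\}.$$ Then $\sum_{i=1}^n\pi_i^{\mathrm{DRRO}}(\delta)\,t_i\ge\sum_{i=1}^n\pi_i^{\mathrm{DRO}}(\delta)\,t_i$. If $\phi$ is strictly increasing and the two optimizers differ, the inequality is strict.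
   Context: $\Delta_n$ is the probability simplex in $\mathbb R^n$; $\|\pi\|_\infty=\max_i|\pi_i|$. The first problem is the promptwise distributionally robust (worst-case value) problem under $\ell_1$ reward ambiguity of radius $\delta$; the second is equivalent to the promptwise worst-case regret problem under the same ambiguity. *)

From HB Require Import structures.
From mathcomp Require Import all_boot all_order all_algebra.
Set Implicit Arguments. Unset Strict Implicit. Unset Printing Implicit Defensive.
Import Order.TTheory GRing.Theory Num.Theory.
Local Open Scope ring_scope.

(* maximum of a (nonempty) list of reals; for [::] it returns 0 (never used) *)
Definition seqmax (R : realFieldType) (s : seq R) : R :=
  foldr Num.max (head 0 s) s.

Definition maxI (R : realFieldType) (n : nat) (f : 'I_n -> R) : R :=
  seqmax [seq f i | i <- enum 'I_n].

Definition inSimplex (R : realFieldType) (n : nat) (p : 'I_n -> R) : Prop :=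
  (forall i, 0 <= p i) /\ \sum_(i < n) p i = 1.

Definition inner (R : realFieldType) (n : nat) (p q : 'I_n -> R) : R :=
  \sum_(i < n) p i * q i.

Definition supnorm (R : realFieldType) (n : nat) (p : 'I_n -> R) : R :=
  maxI (fun i => `|p i|).

Definition isArgmaxSimplex (R : realFieldType) (n : nat)
  (F : ('I_n -> R) -> R) (p : 'I_n -> R) : Prop :=
  inSimplex p /\ forall q, inSimplex q -> F q <= F p.

Definition dro_obj (R : realFieldType) (n : nat) (delta : R) (r : 'I_n -> R)
  (p : 'I_n -> R) : R := inner p r - delta * supnorm p.

Definition drro_obj (R : realFieldType) (n : nat) (delta : R) (r : 'I_n -> R)
  (p : 'I_n -> R) : R := inner p r - maxI (fun i => r i - delta * p i).

From HB Require Import structures.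
From mathcomp Require Import all_boot all_order all_algebra.
From mathcomp Require Import lra.
From Stdlib Require Import FunctionalExtensionality.
Set Implicit Arguments. Unset Strict Implicit. Unset Printing Implicit Defensive.
Import Order.TTheory GRing.Theory Num.Theory.
Local Open Scope ring_scope.

(* Write G_j = sum_(i <= j) (r_i - r_j) for the total excess of the j+1 best
   rewards over r_j. Moving a small amount of mass inside the simplex shows two
   facts about maximizers. For a DRO maximizer a, a_j < ||a||_inf forces
   delta <= G_j: otherwise moving mass from all maximal coordinates onto j would
   lower the norm by more than it costs. For a DRRO maximizer b, every j <> 0 with
   b_j > 0 attains max_i (r_i - delta b_i) (otherwise moving mass from j to 0
   would pay off), whence G_j < delta and b is strictly decreasing on its support.
   Together: if b_j > a_j then a_j = ||a||_inf, and any i with b_i < a_i comes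
   after j. So b - a, which sums to zero, is positive only before it is negative,
   while phi(r_i) decreases with i; hence sum_i (b_i - a_i) phi(r_i) >= 0,
   strictly when phi is strictly increasing and b <> a. *)

Section Maximum.
Variable R : realFieldType.

Lemma foldr_max_mem (h : R) s : foldr Num.max h s \in h :: s.
Proof.
elim: s => [|x s IH] /=; first exact: mem_head.
rewrite maxEle; case: ifP => _; last by rewrite !inE eqxx orbT.
by move: IH; rewrite !inE => /orP [->|->]; rewrite ?orbT.
Qed.

Lemma seqmax_mem (s : seq R) : s != [::] -> seqmax s \in s.
Proof.
case: s => [//|x s] _; have := foldr_max_mem x (x :: s).
by rewrite /seqmax /= inE => /orP [/eqP ->|]; rewrite ?mem_head.
Qed.

Lemma le_seqmax (s : seq R) x : x \in s -> x <= seqmax s.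
Proof.
rewrite /seqmax; move: (head 0 s) => h.
elim: s => [//|y s IH] /=; rewrite inE le_max => /orP [/eqP ->|/IH ->].
  by rewrite lexx.
by rewrite orbT.
Qed.

Lemma le_maxI n (f : 'I_n -> R) i : f i <= maxI f.
Proof. by apply: le_seqmax; apply: map_f; rewrite mem_enum. Qed.

Lemma eq_maxI n (f : 'I_n.+1 -> R) : exists i, maxI f = f i.
Proof.
rewrite /maxI; have /seqmax_mem /mapP [i _ ->] : [seq f i | i <- enum 'I_n.+1] != [::].
  by rewrite -size_eq0 size_map size_enum_ord.
by exists i.
Qed.

Lemma le_supnorm n (p : 'I_n -> R) i : p i <= supnorm p.
Proof. exact: le_trans (ler_norm _) (le_maxI (fun i => `|p i|) i). Qed.

Lemma supnorm_le n (p : 'I_n.+1 -> R) c : (forall i, 0 <= p i <= c) -> supnorm p <= c.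
Proof.
rewrite /supnorm => hp; have [i ->] := eq_maxI (fun i => `|p i|).
by have /andP [p0 pc] := hp i; rewrite ger0_norm.
Qed.

End Maximum.

Section Transfer.
Variables (R : realFieldType) (n : nat).

Definition transfer (p w : 'I_n -> R) (j : 'I_n) : 'I_n -> R :=
  fun i => p i - w i + (if i == j then \sum_k w k else 0).

Lemma transfer_simplex p w j :
  inSimplex p -> (forall i, 0 <= w i <= p i) -> inSimplex (transfer p w j).
Proof.
move=> [_ p_sum1] hw; have w_ge0 i : 0 <= w i by case/andP: (hw i).
split=> [i|].
  have /andP [_ wp] := hw i; have : 0 <= \sum_k w k by apply: sumr_ge0.
  by rewrite /transfer; case: (i == j); lra.
rewrite /transfer big_split sumrB /= -big_mkcond big_pred1_eq p_sum1.
by rewrite subrK.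
Qed.

Lemma inner_transfer p w j (r : 'I_n -> R) :
  inner (transfer p w j) r = inner p r - \sum_i w i * (r i - r j).
Proof.
rewrite /inner /transfer.
under eq_bigr => i _ do rewrite mulrDl mulrBl (fun_if (fun x => x * r i)) mul0r.
rewrite big_split sumrB /= -big_mkcond big_pred1_eq mulr_suml.
rewrite [\sum_i w i * (r i - r j)](eq_bigr (fun i => w i * r i - w i * r j)).
  by rewrite sumrB opprB addrA addrAC.
by move=> i _; rewrite mulrBr.
Qed.

End Transfer.

Section SingleCrossing.
Variables (R : realFieldType) (I : finType) (c T : I -> R).
Hypothesis sum_c0 : \sum_i c i = 0.

Lemma zero_sum_signs : (exists i, c i != 0) ->
  (exists i, c i < 0) /\ (exists j, 0 < c j).
Proof.
move=> [i ci]; split.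
  case: (pickP (fun k => c k < 0)) => [k ck|nneg]; first by exists k.
  suff c0 : c i = 0 by rewrite c0 eqxx in ci.
  apply: (psumr_eq0P _ sum_c0) => // k _.
  by rewrite leNgt nneg.
case: (pickP (fun k => 0 < c k)) => [k ck|npos]; first by exists k.
suff c0 : - c i = 0 by move/eqP: c0; rewrite oppr_eq0 (negbTE ci).
have sum_opp_c0 : \sum_k - c k = 0 by rewrite sumrN sum_c0 oppr0.
apply: (psumr_eq0P _ sum_opp_c0) => // k _.
by rewrite oppr_ge0 leNgt npos.
Qed.

Lemma zero_sum_shift x : \sum_i c i * T i = \sum_i c i * (T i - x).
Proof.
under [RHS]eq_bigr do rewrite mulrBr.
by rewrite sumrB -mulr_suml sum_c0 mul0r subr0.
Qed.

Lemma exists_min_on_pos : (exists j, 0 < c j) ->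
  exists2 k, 0 < c k & forall j, 0 < c j -> T k <= T j.
Proof.
by move=> [j cj]; case: (@arg_minP _ _ _ _ (fun j => 0 < c j) T cj) => k; exists k.
Qed.

Hypothesis crossing : forall i j, c i < 0 -> 0 < c j -> T i <= T j.

Lemma crossing_term_ge0 k i : 0 < c k -> (forall j, 0 < c j -> T k <= T j) ->
  0 <= c i * (T i - T k).
Proof.
move=> ck kmin; case: (ltgtP (c i) 0) => [neg|pos|->]; last by rewrite mul0r.
  by rewrite nmulr_rge0 // subr_le0 crossing.
by rewrite pmulr_rge0 // subr_ge0 kmin.
Qed.

Lemma sum_crossing_ge0 : 0 <= \sum_i c i * T i.
Proof.
case: (pickP (fun i => c i != 0)) => [i ci|c0]; last first.
  by rewrite big1 // => i _; move/negbFE/eqP: (c0 i) ->; rewrite mul0r.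
have [_ /exists_min_on_pos [k ck kmin]] := zero_sum_signs (ex_intro _ i ci).
by rewrite (zero_sum_shift (T k)); apply: sumr_ge0 => l _; apply: crossing_term_ge0.
Qed.

Lemma sum_crossing_gt0 : (forall i j, c i < 0 -> 0 < c j -> T i < T j) ->
  (exists i, c i != 0) -> 0 < \sum_i c i * T i.
Proof.
move=> strict /zero_sum_signs [[i ci] /exists_min_on_pos [k ck kmin]].
rewrite (zero_sum_shift (T k)) (bigD1 i) //=.
have term_i : 0 < c i * (T i - T k) by rewrite nmulr_rgt0 // subr_lt0 strict.
have rest : 0 <= \sum_(l | l != i) c l * (T l - T k).
  by apply: sumr_ge0 => l _; apply: crossing_term_ge0.
exact: ltr_pwDl.
Qed.

End SingleCrossing.

Definition top_gap (R : realFieldType) n (r : 'I_n -> R) (j : 'I_n) : R :=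
  \sum_(i < n | (i <= j)%N) (r i - r j).

Section Optimizers.
Variables (R : realFieldType) (n : nat) (delta : R) (r : 'I_n.+1 -> R).
Hypothesis delta_gt0 : 0 < delta.
Hypothesis r_decr : forall i j : 'I_n.+1, (i < j)%N -> r j < r i.

Lemma r_nonincr (i j : 'I_n.+1) : (i <= j)%N -> r j <= r i.
Proof.
by rewrite leq_eqVlt => /orP [/eqP/val_inj ->|/r_decr/ltW].
Qed.

Lemma sum_gap_le_top_gap (P : pred 'I_n.+1) j :
  \sum_(i | P i) (r i - r j) <= top_gap r j.
Proof.
rewrite big_mkcond [leRHS]big_mkcond; apply: ler_sum => i _.
case: (P i); case: leqP => hij //.
- by rewrite subr_le0 ltW // r_decr.
- by rewrite subr_ge0 r_nonincr.
Qed.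

Lemma top_gap0 : top_gap r ord0 = 0.
Proof.
by rewrite /top_gap big1 // => i; rewrite leqn0 => /eqP/(@ord_inj _ _ ord0) ->; rewrite subrr.
Qed.

Lemma dro_top_gap_ge a j : isArgmaxSimplex (dro_obj delta r) a ->
  a j < supnorm a -> delta <= top_gap r j.
Proof.
move=> [a_simplex a_max] aj_lt; have [a_ge0 _] := a_simplex.
set m := supnorm a.
have [g g_lt_m below_g] : exists2 g, g < m & forall i, a i < m -> a i <= g.
  pose f i := if a i < m then a i else a j.
  exists (maxI f) => [|i ai]; last by have := le_maxI f i; rewrite /f ai.
  by have [k ->] := eq_maxI f; rewrite /f; case: ifP.
have g_ge0 : 0 <= g := le_trans (a_ge0 j) (below_g j aj_lt).
pose K : R := #|[pred i | a i == m]|%:R.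
have K_ge0 : 0 <= K by rewrite ler0n.
(* Moving eps off each of the K maximal entries onto j keeps every entry below
   m - eps: the maximal ones drop to it, and a j + K eps <= g + K eps = m - eps. *)
pose eps := (m - g) / (K + 1).
have eps_gt0 : 0 < eps by rewrite divr_gt0 ?subr_gt0 //; lra.
have epsK : eps * K + eps = m - g.
  by rewrite -[eps in _ + eps]mulr1 -mulrDr divfK // lt0r_neq0 //; lra.
have epsK_ge0 : 0 <= eps * K by rewrite mulr_ge0 // ltW.
pose w i := if a i == m then eps else 0.
have w_sum : \sum_i w i = eps * K by rewrite -big_mkcond sumr_const mulr_natr.
have w_bounds i : 0 <= w i <= a i.
  rewrite /w; case: eqVneq => [->|_]; last by rewrite lexx a_ge0.
  by rewrite ltW //=; lra.
have a'_simplex := transfer_simplex j a_simplex w_bounds.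
have a'_le : supnorm (transfer a w j) <= m - eps.
  apply: supnorm_le => i; rewrite a'_simplex.1 /= /transfer w_sum /w.
  case: (eqVneq i j) => [->|_].
    by rewrite (lt_eqF aj_lt) subr0; have := below_g j aj_lt; lra.
  rewrite addr0; case: eqVneq => [->|aim]; first by rewrite lexx.
  have : a i < m by rewrite lt_neqAle aim le_supnorm.
  by move/below_g; lra.
have gain : \sum_i w i * (r i - r j) = eps * \sum_(i | a i == m) (r i - r j).
  rewrite mulr_sumr [RHS]big_mkcond; apply: eq_bigr => i _.
  by rewrite /w; case: ifP; rewrite ?mul0r.
set S := \sum_(i | a i == m) (r i - r j) in gain.
have S_le : S <= top_gap r j := sum_gap_le_top_gap (fun i => a i == m) j.
have := a_max _ a'_simplex; rewrite /dro_obj inner_transfer gain -/m => opt.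
have sup_le : delta * supnorm (transfer a w j) <= delta * (m - eps).
  by rewrite ler_pM2l.
suff : eps * delta <= eps * S by rewrite ler_pM2l //; lra.
lra.
Qed.

Lemma drro_tight b j : isArgmaxSimplex (drro_obj delta r) b ->
  j != ord0 -> 0 < b j -> maxI (fun i => r i - delta * b i) = r j - delta * b j.
Proof.
move=> [b_simplex b_max] j0 bj_gt0.
set t := maxI _; have t_ge i : r i - delta * b i <= t := le_maxI _ i.
apply/le_anti; rewrite t_ge andbT leNgt; apply/negP => slack.
pose eps := Num.min (b j) ((t - (r j - delta * b j)) / delta).
have eps_gt0 : 0 < eps by rewrite lt_min bj_gt0 divr_gt0 // subr_gt0.
have eps_le_b : eps <= b j by rewrite ge_min lexx.
have eps_le_slack : delta * eps <= t - (r j - delta * b j).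
  by rewrite mulrC -ler_pdivlMr // ge_min lexx orbT.
pose w i := if i == j then eps else 0.
have w_sum : \sum_i w i = eps by rewrite -big_mkcond big_pred1_eq.
have w_bounds i : 0 <= w i <= b i.
  rewrite /w; case: eqVneq => [->|_]; first by rewrite eps_le_b andbT ltW.
  by rewrite lexx (b_simplex.1 i).
have b'_simplex := transfer_simplex ord0 b_simplex w_bounds.
have max_le : maxI (fun i => r i - delta * transfer b w ord0 i) <= t.
  have [i ->] := eq_maxI (fun i => r i - delta * transfer b w ord0 i).
  have := t_ge i; rewrite /transfer w_sum /w; case: (eqVneq i j) => [->|_].
    by rewrite (negbTE j0) addr0; lra.
  rewrite subr0; case: eqVneq => _ le_t; last by rewrite addr0.
  by have := mulr_ge0 (ltW delta_gt0) (ltW eps_gt0); lra.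
have gain : \sum_i w i * (r i - r ord0) = eps * (r j - r ord0).
  rewrite (bigD1 j) //= big1 ?addr0 => [|i /negbTE ij]; rewrite /w ?eqxx ?ij //.
  by rewrite mul0r.
have := b_max _ b'_simplex; rewrite /drro_obj inner_transfer gain -/t => opt.
have : 0 < eps * (r ord0 - r j) by rewrite mulr_gt0 // subr_gt0 r_decr // lt0n.
lra.
Qed.

Lemma drro_top_gap_lt b j : isArgmaxSimplex (drro_obj delta r) b ->
  0 < b j -> top_gap r j < delta.
Proof.
move=> b_opt bj_gt0; have [[b_ge0 b_sum1] _] := b_opt.
have [->|j0] := eqVneq j ord0; first by rewrite top_gap0.
have tight := drro_tight b_opt j0 bj_gt0.
have le_tight i : r i - delta * b i <= r j - delta * b j.
  by rewrite -tight; exact: le_maxI (fun i => r i - delta * b i) i.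
have -> : delta = \sum_i delta * b i by rewrite -mulr_sumr b_sum1 mulr1.
rewrite /top_gap big_mkcond (bigD1 j) //= [ltRHS](bigD1 j) //= leqnn subrr.
apply: ltr_leD; first by rewrite mulr_gt0.
apply: ler_sum => i _; have dbi := mulr_ge0 (ltW delta_gt0) (b_ge0 i).
by case: ifP => _ //; have := le_tight i; have := mulr_ge0 (ltW delta_gt0) (b_ge0 j); lra.
Qed.

Lemma drro_lt_on_support b (i j : 'I_n.+1) : isArgmaxSimplex (drro_obj delta r) b ->
  (i < j)%N -> 0 < b j -> b j < b i.
Proof.
move=> b_opt ij bj_gt0.
have j0 : j != ord0 by apply: contraTneq ij => ->.
have := le_maxI (fun i => r i - delta * b i) i.
rewrite (drro_tight b_opt j0 bj_gt0) => le_tight.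
rewrite -(ltr_pM2l delta_gt0); have := r_decr ij; lra.
Qed.

Lemma dro_drro_crossing a b (i j : 'I_n.+1) :
  isArgmaxSimplex (dro_obj delta r) a -> isArgmaxSimplex (drro_obj delta r) b ->
  b i < a i -> a j < b j -> (j < i)%N.
Proof.
move=> a_opt b_opt bi_lt aj_lt; have [[a_ge0 _] _] := a_opt.
have bj_gt0 : 0 < b j := le_lt_trans (a_ge0 j) aj_lt.
have aj_max : a j = supnorm a.
  apply/le_anti; rewrite le_supnorm leNgt /=; apply/negP => /(dro_top_gap_ge a_opt).
  by rewrite leNgt (drro_top_gap_lt b_opt bj_gt0).
case: (ltngtP i j) => [ij|//|/val_inj ij]; last by move: bi_lt; rewrite ij; lra.
have := drro_lt_on_support b_opt ij bj_gt0; have := le_supnorm a i; lra.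
Qed.

End Optimizers.

Theorem mainTheorem12 (R : realFieldType) (n : nat) (delta : R)
  (r : 'I_n -> R) (phi : R -> R) (piDRO piDRRO : 'I_n -> R) :
  (0 < n)%N ->
  0 < delta ->
  (forall i j : 'I_n, (i < j)%N -> r j < r i) ->
  {homo phi : x y / x <= y} ->
  isArgmaxSimplex (dro_obj delta r) piDRO ->
  isArgmaxSimplex (drro_obj delta r) piDRRO ->
  (\sum_(i < n) piDRO i * phi (r i) <= \sum_(i < n) piDRRO i * phi (r i)) /\
  ({homo phi : x y / x < y} -> piDRRO <> piDRO ->
   \sum_(i < n) piDRO i * phi (r i) < \sum_(i < n) piDRRO i * phi (r i)).
Proof.
case: n r piDRO piDRRO => [//|n] r a b _ delta_gt0 r_decr phi_mono a_opt b_opt.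
have [[_ a_sum1] _] := a_opt; have [[_ b_sum1] _] := b_opt.
pose c i := b i - a i.
have c_sum0 : \sum_i c i = 0 by rewrite sumrB a_sum1 b_sum1 subrr.
have diff : \sum_i b i * phi (r i) - \sum_i a i * phi (r i) = \sum_i c i * phi (r i).
  by rewrite -sumrB; apply: eq_bigr => i _; rewrite mulrBl.
have cross i j : c i < 0 -> 0 < c j -> (j < i)%N.
  by rewrite subr_lt0 subr_gt0; exact: dro_drro_crossing delta_gt0 r_decr _ _ i j a_opt b_opt.
split; first by rewrite -subr_ge0 diff; apply: sum_crossing_ge0 => // i j ci cj;
  apply/phi_mono/ltW/r_decr/cross.
move=> phi_strict ba_neq; rewrite -subr_gt0 diff; apply: sum_crossing_gt0 => //.
- by move=> i j ci cj; apply/phi_mono/ltW/r_decr/cross.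
- by move=> i j ci cj; apply/phi_strict/r_decr/cross.
apply/existsP; apply: contra_notT ba_neq => /existsPn c0.
by apply: functional_extensionality => i; apply/eqP; rewrite -subr_eq0; exact: negbNE (c0 i).
Qed.
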